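(* Assume the setting in the context. Let $x_i,x_j\in X$ be distinct. (i) If there exist $G_1,G_2\in\mathcal G$ and $M,N\subseteq X\setminus\{x_i,x_j\}$ with $x_i-G_1(M\cup\{x_j\})\perp\!\!\!\perp x_j-G_2(N)$, then $(x_i,x_j)$ is not invisible and $x_i$ is not a parent of $x_j$. (ii) If there exist $G_1,G_2\in\mathcal G$ and $M,N\subseteq X\setminus\{x_i,x_j\}$ with $x_i-G_1(M)\perp\!\!\!\perp x_j-G_2(N\cup\{x_i\})$, then $(x_i,x_j)$ is not invisible and $x_j$ is not a parent of $x_i$. (iii) If the hypotheses of both (i) and (ii) hold, then $(x_i,x_j)$ is a visible non-edge.
   Context: Model: $X$ is a finite set of observed random variables and $U$ a finite set of unobserved random variables; $V=X\cup U$ and $G=(V,E)$ is a DAG on $V$. Each $v_i\in V$ satisfies $v_i=\sum_{x_j\in \mathrm{pa}(v_i)\cap X} f^{(i)}_j(x_j)+\sum_{u_k\in\mathrm{pa}(v_i)\cap U} f^{(i)}_k(u_k)+n_i$, where the $f$'s are nonlinear functions and the external noises $n_i$ are jointly independent. ''Parent'', ''ancestor'', ''path'', ''d-separation'' refer to $G$ (a path has distinct vertices). Causal Faithfulness Condition (CFC): any conditional independence among variables of $V$ that is not entailed by d-separation in $G$ does not hold. $\perp\!\!\!\perp$ denotes statistical independence, $\not\perp\!\!\!\perp$ dependence. Function class: $\mathcal G$ is a class of generalized additive functions: for $G\in\mathcal G$ and a set $M$ of observed variables, $G(M)=\sum_{x_m\in M} g_m(x_m)$ (with $G(\emptyset)=0$).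 It satisfies: for any $x_i,x_j\in X$, sets $M,N\subseteq X$, $G_1,G_2\in\mathcal G$ and external noise $n_k$, if $n_k\not\perp\!\!\!\perp x_i-G_1(M)$ and $n_k\not\perp\!\!\!\perp x_j-G_2(N)$ then $x_i-G_1(M)\not\perp\!\!\!\perp x_j-G_2(N)$. Definitions, for $X'\subseteq X$ and $x_i,x_j\in X'$: an unobserved causal path (UCP) from $x_i$ to $x_j$ w.r.t. $X'$ is a directed path $x_i\to\cdots\to v_k\to x_j$ in $G$ with $v_k\notin X'$; an unobserved backdoor path (UBP) between $x_i$ and $x_j$ w.r.t. $X'$ is a path $x_i\leftarrow v_k\leftarrow\cdots\leftarrow v\to\cdots\to v_l\to x_j$ with $v_k,v_l\notin X'$ (allowing $v=v_k$, $v=v_l$, or $v=v_k=v_l$; $v$ may be in $X'$). ''UBP/UCP between $x_i$ and $x_j$'' means a UBP or a UCP in either direction. $x_j$ is a visible parent of $x_i$ w.r.t. $X'$ if $x_j$ is a parent of $x_i$ and there is no UBP/UCP between them w.r.t. $X'$; $(x_i,x_j)$ is a visible non-edge w.r.t. $X'$ if there is no edge between them and no UBP/UCP between them w.r.t. $X'$; $(x_i,x_j)$ is invisible w.r.t. $X'$ if there is a UBP/UCP between them w.r.t. $X'$. When $X'$ is omitted, $X'=X$. Standing facts (taken as known), for $X'\subseteq X$ and distinct $x_i,x_j\in X'$: (F1) $x_j$ is a visible parent of $x_i$ w.r.t. $X'$ iff [for all $G_1,G_2\in\mathcal G$, $M\subseteq X'\setminus\{x_i,x_j\}$, $N\subseteq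 X'\setminus\{x_j\}$: $x_i-G_1(M)\not\perp\!\!\!\perp x_j-G_2(N)$] and [there exist $G_1,G_2\in\mathcal G$, $M\subseteq X'\setminus\{x_i\}$, $N\subseteq X'\setminus\{x_i,x_j\}$ with $x_i-G_1(M)\perp\!\!\!\perp x_j-G_2(N)$]. (F2) $(x_i,x_j)$ is a visible non-edge w.r.t. $X'$ iff there exist $G_1,G_2\in\mathcal G$ and $M,N\subseteq X'\setminus\{x_i,x_j\}$ with $x_i-G_1(M)\perp\!\!\!\perp x_j-G_2(N)$. (F3) $(x_i,x_j)$ is invisible w.r.t. $X'$ iff for all $M\subseteq X'\setminus\{x_i\}$, $N\subseteq X'\setminus\{x_j\}$, $G_1,G_2\in\mathcal G$: $x_i-G_1(M)\not\perp\!\!\!\perp x_j-G_2(N)$. *)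

From HB Require Import structures.
From mathcomp Require Import all_boot all_order all_algebra.
From mathcomp Require Import all_classical all_reals all_analysis.
Set Implicit Arguments.
Unset Strict Implicit.
Unset Printing Implicit Defensive.
Import Order.TTheory GRing.Theory Num.Theory.
Local Open Scope classical_set_scope.
Local Open Scope ring_scope.

(* Graph notions.  V : finite vertex set, E u v means the edge u -> v. *)
Section Graph.
Variable V : finType.
Variable E : rel V.

Definition acyclic_graph : Prop := forall u v, E u v -> ~~ connect E v u.

(* Unobserved causal path from xi to xj w.r.t. X': a directed path with
   distinct vertices xi -> ... -> vk -> xj whose last intermediate vertex
   vk (= last xi p) is not in X'. *)
Definition ucp (X' : {set V}) (xi xj : V) : Prop :=
  exists p : seq V,
    [/\ path E xi (rcons p xj), uniq (xi :: rcons p xj) & last xi p \notin X'].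

(* Unobserved backdoor path between xi and xj w.r.t. X':
   xi <- vk <- ... <- v -> ... -> vl -> xj, with distinct vertices,
   vk = last v p, vl = last v q not in X' (v = vk / v = vl allowed). *)
Definition ubp (X' : {set V}) (xi xj : V) : Prop :=
  exists (v : V) (p q : seq V),
    [/\ path E v (rcons p xi), path E v (rcons q xj),
        uniq (v :: rcons p xi ++ rcons q xj),
        last v p \notin X' & last v q \notin X'].

Definition ubp_or_ucp (X' : {set V}) (xi xj : V) : Prop :=
  ubp X' xi xj \/ ucp X' xi xj \/ ucp X' xj xi.

Definition visible_parent (X' : {set V}) (xi xj : V) : Prop :=
  E xj xi /\ ~ ubp_or_ucp X' xi xj.

Definition visible_nonedge (X' : {set V}) (xi xj : V) : Prop :=
  ~~ E xi xj /\ ~~ E xj xi /\ ~ ubp_or_ucp X' xi xj.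

Definition invisible (X' : {set V}) (xi xj : V) : Prop :=
  ubp_or_ucp X' xi xj.

Definition adj : rel V := fun u v => E u v || E v u.

(* the path a :: q is active given C: every interior collider has a
   descendant (itself included) in C, every interior non-collider is
   not in C *)
Definition active_path (C : {set V}) (a : V) (q : seq V) : Prop :=
  let s := a :: q in
  forall i, (0 < i)%N -> (i.+1 < size s)%N ->
    let u := nth a s i.-1 in let w := nth a s i in let x := nth a s i.+1 in
    (E u w && E x w -> exists2 z, connect E w z & z \in C) /\
    (~~ (E u w && E x w) -> w \notin C).

Definition d_connected (C : {set V}) (a b : V) : Prop :=
  exists q : seq V,
    [/\ path adj a q, last a q = b, uniq (a :: q) & active_path C a q].

Definition d_separated (A B C : {set V}) : Prop :=
  forall a b, a \in A -> b \in B -> ~ d_connected C a b.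

End Graph.

Section Proba.
Context {R : realType} {d : measure_display} {T : measurableType d}.
Variable P : probability T R.

Definition indep (Y Z : T -> R) : Prop :=
  forall A B : set R, measurable A -> measurable B ->
    P (Y @^-1` A `&` Z @^-1` B) = (P (Y @^-1` A) * P (Z @^-1` B))%E.

Variable V : finType.

Definition mutually_indep (Y : V -> T -> R) : Prop :=
  forall B : V -> set R, (forall v, measurable (B v)) ->
    P (\bigcap_(v in [set: V]) (Y v @^-1` B v)) =
    (\prod_(v : V) P (Y v @^-1` B v))%E.

Variable var : V -> T -> R.

Definition sigma_of (S : {set V}) : set (set T) :=
  <<s [set A | exists v (B : set R), [/\ v \in S, measurable B & A = var v @^-1` B]] >>.

(* conditional independence of the variables in A and in B given those in C:
   for every event a of sigma(A), P(a | sigma(B u C)) has a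
   sigma(C)-measurable version h *)
Definition cond_indep (A B C : {set V}) : Prop :=
  forall a, sigma_of A a ->
    exists h : T -> R,
      (forall Bs : set R, measurable Bs -> sigma_of C (h @^-1` Bs)) /\
      (forall e, sigma_of (B :|: C) e ->
         (P (a `&` e) = \int[P]_(x in e) (h x)%:E)%E).

(* the residual  x - G(M) = x - \sum_(m in M) g_m(m) *)
Definition res (x : V) (G : V -> R -> R) (M : {set V}) : T -> R :=
  fun w => var x w - \sum_(m in M) G m (var m w).

End Proba.

Section Model.
Context {R : realType} {d : measure_display} {T : measurableType d}.
Variables (P : probability T R) (V : finType) (E : rel V) (X : {set V}).
Variables (var noise : V -> T -> R) (f : V -> V -> R -> R).
Variable GG : set (V -> R -> R).

Definition sem_equations : Prop :=
  forall v w, var v w = \sum_(u : V | E u v) f v u (var u w) + noise v w.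

Definition nonlinear_links : Prop :=
  forall u v, E u v -> ~ (exists a b : R, forall x, f v u x = a * x + b).

Definition model_measurable : Prop :=
  (forall v, measurable_fun setT (var v)) /\
  (forall v, measurable_fun setT (noise v)) /\
  (forall u v, measurable_fun setT (f v u)).

Definition CFC : Prop :=
  forall A B C : {set V}, fintype.disjoint (mem A) (mem B) -> fintype.disjoint (mem A) (mem C) ->
    fintype.disjoint (mem B) (mem C) -> cond_indep P var A B C -> d_separated E A B C.

Definition class_property : Prop :=
  (forall G, GG G -> forall m, measurable_fun setT (G m)) /\
  (forall (xi xj : V) (M N : {set V}) G1 G2 (k : V),
     xi \in X -> xj \in X -> M \subset X -> N \subset X -> GG G1 -> GG G2 ->
     ~ indep P (noise k) (res var xi G1 M) ->
     ~ indep P (noise k) (res var xj G2 N) ->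
     ~ indep P (res var xi G1 M) (res var xj G2 N)).

Definition fact_F1 : Prop :=
  forall X' : {set V}, X' \subset X -> forall xi xj, xi \in X' -> xj \in X' ->
  xi != xj ->
  (visible_parent E X' xi xj <->
   ((forall G1 G2 (M N : {set V}), GG G1 -> GG G2 ->
       M \subset X' :\ xi :\ xj -> N \subset X' :\ xj ->
       ~ indep P (res var xi G1 M) (res var xj G2 N)) /\
    (exists G1 G2 (M N : {set V}), [/\ GG G1, GG G2,
       M \subset X' :\ xi, N \subset X' :\ xi :\ xj &
       indep P (res var xi G1 M) (res var xj G2 N)]))).

Definition fact_F2 : Prop :=
  forall X' : {set V}, X' \subset X -> forall xi xj, xi \in X' -> xj \in X' ->
  xi != xj ->
  (visible_nonedge E X' xi xj <->
   (exists G1 G2 (M N : {set V}), [/\ GG G1, GG G2,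
       M \subset X' :\ xi :\ xj, N \subset X' :\ xi :\ xj &
       indep P (res var xi G1 M) (res var xj G2 N)])).

Definition fact_F3 : Prop :=
  forall X' : {set V}, X' \subset X -> forall xi xj, xi \in X' -> xj \in X' ->
  xi != xj ->
  (invisible E X' xi xj <->
   (forall G1 G2 (M N : {set V}), GG G1 -> GG G2 ->
       M \subset X' :\ xi -> N \subset X' :\ xj ->
       ~ indep P (res var xi G1 M) (res var xj G2 N))).

Definition hyp_i (xi xj : V) : Prop :=
  exists G1 G2 (M N : {set V}), [/\ GG G1, GG G2,
    M \subset X :\ xi :\ xj, N \subset X :\ xi :\ xj &
    indep P (res var xi G1 (xj |: M)) (res var xj G2 N)].

Definition hyp_ii (xi xj : V) : Prop :=
  exists G1 G2 (M N : {set V}), [/\ GG G1, GG G2,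
    M \subset X :\ xi :\ xj, N \subset X :\ xi :\ xj &
    indep P (res var xi G1 M) (res var xj G2 (xi |: N))].

End Model.

From HB Require Import structures.
From mathcomp Require Import all_boot all_order all_algebra.
From mathcomp Require Import all_classical all_reals all_analysis.

(* Both items follow from F3 and F1 alone. An independence of the form in (ii),
   with x_i added to the regressors of x_j, satisfies the conditioning-set
   constraints of F3, so (x_i, x_j) is not invisible; if x_j were a parent of
   x_i it would then be a visible parent, and the same independence contradicts
   the first condition of F1. Item (i) is item (ii) with x_i and x_j swapped,
   using that independence is symmetric. *)

Lemma indep_sym {R : realType} {d : measure_display} {T : measurableType d}
  {P : probability T R} {Y Z : T -> R} : indep P Y Z -> indep P Z Y.
Proof. by move=> YZ A B mA mB; rewrite setIC YZ // muleC. Qed.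

Section SetD1.
Context {V : finType}.
Implicit Types (X M : {set V}) (a b : V).

Lemma setD1C X a b : X :\ a :\ b = X :\ b :\ a.
Proof. by rewrite !finset.setDDl finset.setUC. Qed.

Lemma subset_setD1W {X M a b} : M \subset X :\ a :\ b -> M \subset X :\ a.
Proof. by move=> MX; apply: fintype.subset_trans MX (finset.subsetDl _ _). Qed.

Lemma setU1_subset_setD1 {X M a b} :
  a \in X -> a != b -> M \subset X :\ b :\ a -> a |: M \subset X :\ b.
Proof.
move=> Xa ab /subset_setD1W MXb.
by rewrite finset.subUset finset.sub1set !inE ab Xa MXb.
Qed.

End SetD1.

Section VisibilityFromIndependence.
Context {R : realType} {d : measure_display} {T : measurableType d}.
Context {P : probability T R} {V : finType} {E : rel V} {X : {set V}}.
Context {var : V -> T -> R} {GG : set (V -> R -> R)}.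
Hypotheses (HF1 : fact_F1 P E X var GG) (HF3 : fact_F3 P E X var GG).

Section Pair.
Context {xi xj : V}.
Hypotheses (Xxi : xi \in X) (Xxj : xj \in X) (xij : xi != xj).

Lemma indep_res_not_invisible {G1 G2} {M N : {set V}} :
  GG G1 -> GG G2 -> M \subset X :\ xi -> N \subset X :\ xj ->
  indep P (res var xi G1 M) (res var xj G2 N) -> ~ invisible E X xi xj.
Proof.
move=> G1G G2G MX NX indepMN /(HF3 X (subxx X) xi xj Xxi Xxj xij) dep.
exact: dep G1G G2G MX NX indepMN.
Qed.

Lemma indep_res_not_parent {G1 G2} {M N : {set V}} :
  GG G1 -> GG G2 -> M \subset X :\ xi :\ xj -> N \subset X :\ xj ->
  indep P (res var xi G1 M) (res var xj G2 N) -> ~~ E xj xi.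
Proof.
move=> G1G G2G MX NX indepMN; apply/negP => Eji.
have vis : visible_parent E X xi xj.
  split=> //.
  exact: indep_res_not_invisible G1G G2G (subset_setD1W MX) NX indepMN.
have [dep _] := (HF1 X (subxx X) xi xj Xxi Xxj xij).1 vis.
exact: dep G1G G2G MX NX indepMN.
Qed.

End Pair.

Context {xi xj : V}.
Hypotheses (Xxi : xi \in X) (Xxj : xj \in X) (xij : xi != xj).

Lemma hyp_ii_not_invisible_not_edge :
  hyp_ii P X var GG xi xj -> ~ invisible E X xi xj /\ ~~ E xj xi.
Proof.
move=> [G1 [G2 [M [N [G1G G2G MX NX indepMN]]]]].
rewrite setD1C in NX.
have xiNX := setU1_subset_setD1 Xxi xij NX.
split; first exact (indep_res_not_invisible Xxi Xxj xij G1G G2G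
  (subset_setD1W MX) xiNX indepMN).
exact (indep_res_not_parent Xxi Xxj xij G1G G2G MX xiNX indepMN).
Qed.

Lemma hyp_i_not_invisible_not_edge :
  hyp_i P X var GG xi xj -> ~ invisible E X xi xj /\ ~~ E xi xj.
Proof.
move=> [G1 [G2 [M [N [G1G G2G MX NX indepMN]]]]].
have xji : xj != xi by rewrite eq_sym.
have xjMX := setU1_subset_setD1 Xxj xji MX.
rewrite setD1C in NX.
split; first exact (indep_res_not_invisible Xxi Xxj xij G1G G2G xjMX
  (subset_setD1W NX) indepMN).
exact (indep_res_not_parent Xxj Xxi xji G2G G1G NX xjMX (indep_sym indepMN)).
Qed.

End VisibilityFromIndependence.

Theorem lemma9 (R : realType) (d : measure_display) (T : measurableType d)
  (P : probability T R) (V : finType) (E : rel V) (X : {set V})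
  (var noise : V -> T -> R) (f : V -> V -> R -> R) (GG : set (V -> R -> R))
  (HDAG : acyclic_graph E)
  (Hsem : sem_equations E var noise f)
  (Hnonlin : nonlinear_links E f)
  (Hmeas : model_measurable var noise f)
  (Hnoise : mutually_indep P noise)
  (HCFC : CFC P E var)
  (Hclass : class_property P X var noise GG)
  (HF1 : fact_F1 P E X var GG)
  (HF2 : fact_F2 P E X var GG)
  (HF3 : fact_F3 P E X var GG)
  (xi xj : V) (Hxi : xi \in X) (Hxj : xj \in X) (Hij : xi != xj) :
  (hyp_i P X var GG xi xj -> ~ invisible E X xi xj /\ ~~ E xi xj) /\
  (hyp_ii P X var GG xi xj -> ~ invisible E X xi xj /\ ~~ E xj xi) /\
  (hyp_i P X var GG xi xj -> hyp_ii P X var GG xi xj ->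
     visible_nonedge E X xi xj).
Proof.
have item_i := hyp_i_not_invisible_not_edge HF1 HF3 Hxi Hxj Hij.
have item_ii := hyp_ii_not_invisible_not_edge HF1 HF3 Hxi Hxj Hij.
split=> //; split=> // hi hii.
have [not_inv not_Eij] := item_i hi.
have [_ not_Eji] := item_ii hii.
by split.
Qed.
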